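(* Let $M_1$ and $M_2$ be matroids on a finite set $E$ with rank functions $r_1,r_2$, and let $G$ be their mixing graph. If $A,B\in\mathscr{X}$ and $|A\triangle B|\le2$, then $G$ contains a path from $A$ to $B$.
   Context: Let $\mathscr{X}=\{A\subseteq E: r_1(A)\ne r_2(A)\}$. The mixing graph $G=G_{M_1,M_2}$ has vertex set $\mathscr{X}$, and $AB$ is an edge iff either (i) $A\subsetneq B$ or $B\subsetneq A$, or (ii) $A\cap B\notin\mathscr{X}$, $A\cup B\notin\mathscr{X}$, and $|A\triangle B|=2$. Here $\triangle$ denotes symmetric difference. *)

From mathcomp Require Import all_boot.
Set Implicit Arguments. Unset Strict Implicit. Unset Printing Implicit Defensive.

Definition is_matroid_rank (T : finType) (r : {set T} -> nat) : Prop :=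
  [/\ (forall A : {set T}, r A <= #|A|),
      (forall A B : {set T}, A \subset B -> r A <= r B) &
      (forall A B : {set T}, r (A :|: B) + r (A :&: B) <= r A + r B)].

Definition symdiff (T : finType) (A B : {set T}) : {set T} :=
  (A :\: B) :|: (B :\: A).

Definition mixX (T : finType) (r1 r2 : {set T} -> nat) (A : {set T}) : bool :=
  r1 A != r2 A.

Definition mix_edge (T : finType) (r1 r2 : {set T} -> nat) : rel {set T} :=
  fun A B =>
    [&& mixX r1 r2 A, mixX r1 r2 B &
        [|| (A \proper B), (B \proper A) |
            [&& ~~ mixX r1 r2 (A :&: B), ~~ mixX r1 r2 (A :|: B)
              & #|symdiff A B| == 2]]].

Definition mix_path (T : finType) (r1 r2 : {set T} -> nat) (A B : {set T}) : Prop :=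
  mixX r1 r2 A /\ exists s : seq {set T}, path (mix_edge r1 r2) A s /\ last A s = B.

(* If A and B are comparable they are adjacent (or equal).  Otherwise both
   differences A \ B and B \ A are nonempty, hence singletons, and A, B are
   joined through A ∩ B or A ∪ B if one of them is a vertex; if neither is,
   A and B are adjacent by the second kind of edge. *)

From mathcomp Require Import all_boot.

Set Implicit Arguments.
Unset Strict Implicit.
Unset Printing Implicit Defensive.

Lemma card_symdiff (T : finType) (A B : {set T}) :
  #|symdiff A B| = #|A :\: B| + #|B :\: A|.
Proof.
rewrite -cardsUI [_ :&: _](_ : _ = set0) ?cards0 ?addn0 //.
by apply/setP=> x; rewrite !inE; case: (x \in A); case: (x \in B).
Qed.

Lemma card_symdiff_incomparable (T : finType) (A B : {set T}) :
  ~~ (A \subset B) -> ~~ (B \subset A) -> 2 <= #|symdiff A B|.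
Proof.
move=> nsAB nsBA; rewrite card_symdiff -(addn1 1).
by apply: leq_add; rewrite card_gt0 setD_eq0.
Qed.

Section MixingGraph.

Variables (T : finType) (r1 r2 : {set T} -> nat).

Local Notation X := (mixX r1 r2).
Local Notation edge := (mix_edge r1 r2).
Local Notation connected := (mix_path r1 r2).

Lemma mix_path_refl A : X A -> connected A A.
Proof. by move=> XA; split=> //; exists [::]. Qed.

Lemma mix_path_edge A B : edge A B -> connected A B.
Proof.
by move=> eAB; split; [case/and3P: eAB | exists [:: B]; rewrite /= eAB].
Qed.

Lemma mix_path_trans A B C : connected A B -> connected B C -> connected A C.
Proof.
move=> [XA [s [pAs lAs]]] [_ [t [pBt lBt]]]; split=> //.
by exists (s ++ t); rewrite cat_path last_cat lAs pAs pBt.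
Qed.

Lemma mix_edge_proper A B :
  X A -> X B -> (A \proper B) || (B \proper A) -> edge A B.
Proof. by move=> XA XB /orP[] pAB; rewrite /mix_edge XA XB pAB ?orbT. Qed.

Lemma mix_path_comparable A B :
  X A -> X B -> (A \subset B) || (B \subset A) -> connected A B.
Proof.
move=> XA XB sAB; have [<-|nAB] := eqVneq A B; first exact: mix_path_refl.
apply/mix_path_edge/mix_edge_proper => //.
by rewrite !properEneq nAB eq_sym nAB.
Qed.

End MixingGraph.

Theorem lemma3p7 (T : finType) (r1 r2 : {set T} -> nat)
  (M1 : is_matroid_rank r1) (M2 : is_matroid_rank r2)
  (A B : {set T}) :
  mixX r1 r2 A -> mixX r1 r2 B -> #|symdiff A B| <= 2 ->
  mix_path r1 r2 A B.
Proof.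
move=> XA XB le_AB_2.
have [sAB|nsAB] := boolP (A \subset B).
  by apply: mix_path_comparable; rewrite ?sAB.
have [sBA|nsBA] := boolP (B \subset A).
  by apply: mix_path_comparable; rewrite ?sBA ?orbT.
have [XI|nXI] := boolP (mixX r1 r2 (A :&: B)).
  by apply: (mix_path_trans (B := A :&: B)); apply: mix_path_comparable;
    rewrite ?subsetIl ?subsetIr ?orbT.
have [XU|nXU] := boolP (mixX r1 r2 (A :|: B)).
  by apply: (mix_path_trans (B := A :|: B)); apply: mix_path_comparable;
    rewrite ?subsetUl ?subsetUr ?orbT.
apply: mix_path_edge; rewrite /mix_edge XA XB nXI nXU eqn_leq le_AB_2.
by rewrite card_symdiff_incomparable ?orbT.
Qed.
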